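(* Let $d\in\mathbb N$, $Q,K\in\mathbb R^{d\times d}$, $A:=K^\top Q/\sqrt d$, $V=I_d$ (so $k=d$), and let $f$ be self-attention with parameters $(A,V)$. Assume $A$ has at least one real eigenvalue; let $\gamma_1\ge\dots\ge\gamma_\delta$ be its real eigenvalues and $\gamma:=\max(-\gamma_\delta,\gamma_1/8)$, and assume $\gamma>0$. Let $R\mapsto n(R)\in\mathbb N$ satisfy $n(R)\sim_{R\to+\infty}\exp(2\gamma R^2)$. Then there exists a function $\theta:[0,+\infty)\to[0,+\infty)$ with $\theta(R)\to1$ as $R\to+\infty$ such that $$\mathrm{Lip}\big(f_{|B_R^{n(R)}}\big)\ge\theta(R)\,\frac{\gamma}{2}\,R^2e^{\gamma R^2}.$$
   Context: For $X=(x_1,\dots,x_n)\in(\mathbb R^d)^n$, $f(X)=\big(V\sum_{j=1}^nP_{ij}x_j\big)_{1\le i\le n}$ with $P_{ij}=\exp(x_i^\top A^\top x_j)/\sum_{l=1}^n\exp(x_i^\top A^\top x_l)$. $B_R$ is the closed ball in $\mathbb R^d$ of center 0, radius $R$; $\mathrm{Lip}(f_{|\mathcal X})=\sup_{X\ne Y\in\mathcal X}\|f(X)-f(Y)\|_F/\|X-Y\|_F$ with the Frobenius norm. $\varphi(R)\sim\psi(R)$ means $\varphi(R)/\psi(R)\to1$. *)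

From HB Require Import structures.
From mathcomp Require Import all_boot all_order all_algebra.
From mathcomp Require Import all_classical all_reals all_analysis.
Set Implicit Arguments. Unset Strict Implicit. Unset Printing Implicit Defensive.
Import Order.TTheory GRing.Theory Num.Theory.
Local Open Scope ring_scope.
Local Open Scope classical_set_scope.

(* A point X = (x_1,...,x_n) of (R^d)^n is an n x d matrix whose i-th row is x_i. *)

Definition attn_weight (R : realType) (n d : nat) (A : 'M[R]_d)
  (X : 'M[R]_(n, d)) (i j : 'I_n) : R :=
  expR ((row i X *m A^T *m (row j X)^T) 0 0) /
  \sum_(l < n) expR ((row i X *m A^T *m (row l X)^T) 0 0).

(* Self-attention: f(X)_i = V (sum_j P_ij x_j); as a row vector: (sum_j P_ij x_j) V^T. *)
Definition self_attention (R : realType) (n d k : nat) (A : 'M[R]_d)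
  (V : 'M[R]_(k, d)) (X : 'M[R]_(n, d)) : 'M[R]_(n, k) :=
  \matrix_(i < n) ((\sum_(j < n) attn_weight A X i j *: row j X) *m V^T).

Definition frob (R : realType) (m p : nat) (M : 'M[R]_(m, p)) : R :=
  Num.sqrt (\sum_(i < m) \sum_(j < p) M i j ^+ 2).

Definition ballR_pow (R : realType) (n d : nat) (r : R) : set 'M[R]_(n, d) :=
  [set X | forall i : 'I_n, frob (row i X) <= r].

(* The value 0 is included so that the Lipschitz constant of a function on a
   set with at most one point is 0 (the standard convention). *)
Definition lip_on (R : realType) (m p q s : nat)
  (f : 'M[R]_(m, p) -> 'M[R]_(q, s)) (S : set 'M[R]_(m, p)) : \bar R :=
  ereal_sup ([set (0 : \bar R)] `|`
    [set z | exists X Y, [/\ S X, S Y, X <> Y & z = (frob (f X - f Y) / frob (X - Y))%:E]]).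

(* Along a unit eigenvector u of A with real eigenvalue lam, the inputs X = v u
   have attention scores lam v_i v_j.  Put every token at a = al r except one at t:
   each of the n - 1 others is mapped to W(t) u, with W the attention average
   [outlier_mean], so moving the outlier from s to s' moves f(X) by at least
   sqrt (n - 1) |W s - W s'| while X moves by |s - s'|.  At s = -r the slope of W is
   at least K c x / ((x + c) (x + c)) up to a factor e^(-1/r), where
   K = lam al (-1 - al) r^2 = 2 gamma r^2, x = e^(lam al s r) and
   c = (n - 1) e^(lam al^2 r^2).  When n - 1 ~ e^(2 gamma r^2) we get c ~ x, so the
   slope is about K / 4 = gamma r^2 / 2, and sqrt (n - 1) ~ e^(gamma r^2) supplies
   the exponential factor. *)

From HB Require Import structures.
From mathcomp Require Import all_boot all_order all_algebra.
From mathcomp Require Import all_classical all_reals all_analysis.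
From mathcomp Require Import ring lra.
Import Order.TTheory GRing.Theory Num.Theory numFieldNormedType.Exports.
Local Open Scope ring_scope.
Local Open Scope classical_set_scope.
Set Implicit Arguments.
Unset Strict Implicit.

Section RankOneInputs.
Variable R : realType.

Lemma row_col_mul n d (v : 'cV[R]_n) (u : 'rV[R]_d) i : row i (v *m u) = v i 0 *: u.
Proof. by apply/rowP => k; rewrite !mxE big_ord1. Qed.

Lemma frob_rank_one n d (c : 'I_n -> R) (u : 'rV[R]_d) (M : 'M[R]_(n, d)) :
  (forall i k, M i k = c i * u 0 k) -> \sum_k u 0 k ^+ 2 = 1 ->
  frob M = Num.sqrt (\sum_i c i ^+ 2).
Proof.
move=> ME u1; rewrite /frob; congr Num.sqrt; apply: eq_bigr => i _.
under eq_bigr do rewrite ME exprMn.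
by rewrite -mulr_sumr u1 mulr1.
Qed.

Lemma self_attention_rank_one n d (A : 'M[R]_d) (v : 'cV[R]_n) (u : 'rV[R]_d) i k :
  self_attention A 1%:M (v *m u) i k =
  (\sum_j attn_weight A (v *m u) i j * v j 0) * u 0 k.
Proof.
rewrite /self_attention mxE trmx1 mulmx1 summxE mulr_suml.
by apply: eq_bigr => j _; rewrite !mxE big_ord1 mulrA.
Qed.

Lemma lip_on_ge m p q s (f : 'M[R]_(m, p) -> 'M[R]_(q, s)) S X Y :
  S X -> S Y -> X <> Y ->
  ((frob (f X - f Y) / frob (X - Y))%:E <= lip_on f S)%E.
Proof. by move=> SX SY XY; apply: ereal_sup_ubound; right; exists X, Y. Qed.

Lemma lip_on_ge0 m p q s (f : 'M[R]_(m, p) -> 'M[R]_(q, s)) S :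
  (0 <= lip_on f S)%E.
Proof. by apply: ereal_sup_ubound; left. Qed.

Definition outlier_col n (i0 : 'I_n) (a t : R) : 'cV[R]_n :=
  \col_j (if j == i0 then t else a).

Lemma sum_outlier_col n (i0 : 'I_n) (a t : R) (F : R -> R) :
  \sum_j F (outlier_col i0 a t j 0) = F t + (n.-1)%:R * F a.
Proof.
rewrite (bigD1 i0) //= !mxE eqxx; congr (_ + _).
rewrite (eq_bigr (fun _ => F a)); last by move=> j /negbTE ji0; rewrite !mxE ji0.
by rewrite sumr_const cardC1 card_ord mulr_natl.
Qed.

Lemma frob_outlier_col_sub n d (i0 : 'I_n) (u : 'rV[R]_d) (a s s' : R) :
  \sum_k u 0 k ^+ 2 = 1 ->
  frob (outlier_col i0 a s *m u - outlier_col i0 a s' *m u) = `|s - s'|.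
Proof.
move=> u1; rewrite -mulmxBl.
rewrite (@frob_rank_one n d
          (fun i => (outlier_col i0 a s - outlier_col i0 a s') i 0) u) //;
  last by move=> i k; rewrite mxE big_ord1.
rewrite (bigD1 i0) //= big1 ?addr0 ?sqrtr_sqr ?mxE ?eqxx //.
by move=> i /negbTE ii0; rewrite !mxE ii0 subrr expr0n.
Qed.

(* The attention average [sum_j P_ij x_j] seen by a token at [a] when one
   token sits at [t] and [m] others at [a], for scores [x_i A^T x_j] equal to
   [lam x_i x_j]. *)
Definition outlier_mean (m a lam t : R) : R :=
  (expR (a * t * lam) * t + m * (expR (a * a * lam) * a)) /
  (expR (a * t * lam) + m * expR (a * a * lam)).

Section Eigenvector.
Variables (d : nat) (A : 'M[R]_d) (lam : R) (u : 'rV[R]_d).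
Hypotheses (uA : u *m A = lam *: u) (u1 : \sum_k u 0 k ^+ 2 = 1).

Lemma eigen_rank_one_score n (v : 'cV[R]_n) i j :
  (row i (v *m u) *m A^T *m (row j (v *m u))^T) 0 0 = v i 0 * v j 0 * lam.
Proof.
have uAu : (u *m A^T *m u^T) 0 0 = lam.
  have -> : (u *m A^T *m u^T) 0 0 = (u *m A^T *m u^T)^T 0 0 by rewrite [RHS]mxE.
  rewrite !trmx_mul !trmxK mulmxA uA -scalemxAl mxE.
  rewrite -[RHS]mulr1 -u1 mxE; congr (_ * _); apply: eq_bigr => k _.
  by rewrite !mxE expr2.
rewrite !row_col_mul -!scalemxAl linearZ /= -scalemxAr.
by rewrite [LHS]mxE [X in _ * X]mxE uAu mulrA.
Qed.

Lemma attn_mean_outlier n (i0 i : 'I_n) a t : i != i0 ->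
  \sum_j attn_weight A (outlier_col i0 a t *m u) i j * outlier_col i0 a t j 0 =
  outlier_mean (n.-1)%:R a lam t.
Proof.
move=> ii0; rewrite /attn_weight.
under eq_bigr do rewrite mulrAC.
rewrite -mulr_suml.
under eq_bigr do rewrite eigen_rank_one_score.
under [X in _ / X]eq_bigr do rewrite eigen_rank_one_score.
rewrite {1 2}/outlier_col mxE (negbTE ii0).
rewrite (sum_outlier_col i0 a t (fun x => expR (a * x * lam) * x)).
by rewrite (sum_outlier_col i0 a t (fun x => expR (a * x * lam))).
Qed.

Lemma outlier_col_in_ball n (i0 : 'I_n) a t r : `|a| <= r -> `|t| <= r ->
  ballR_pow r (outlier_col i0 a t *m u).
Proof.
move=> ar tr i; rewrite row_col_mul.
rewrite (@frob_rank_one 1 d (fun _ => outlier_col i0 a t i 0) u) //;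
  last by move=> i' k; rewrite !mxE (ord1 i').
by rewrite big_ord1 sqrtr_sqr !mxE; case: ifP.
Qed.

Lemma frob_self_attention_outlier_ge n (i0 : 'I_n) a s s' :
  Num.sqrt (n.-1)%:R *
    `|outlier_mean (n.-1)%:R a lam s - outlier_mean (n.-1)%:R a lam s'| <=
  frob (self_attention A 1%:M (outlier_col i0 a s *m u) -
        self_attention A 1%:M (outlier_col i0 a s' *m u)).
Proof.
pose c := fun (X : 'cV[R]_n) i => \sum_j attn_weight A (X *m u) i j * X j 0.
rewrite (@frob_rank_one n d (fun i => c (outlier_col i0 a s) i -
                                      c (outlier_col i0 a s') i) u) //;
  last by move=> i k; rewrite [LHS]mxE [X in _ + X]mxE !self_attention_rank_one -mulrBl.
rewrite -sqrtr_sqr -sqrtrM // ler_sqrt ?sumr_ge0 // => [|i _]; last exact: sqr_ge0.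
rewrite (bigD1 i0) //= -[X in X <= _]add0r lerD ?sqr_ge0 //.
rewrite (eq_bigr (fun _ => (outlier_mean (n.-1)%:R a lam s -
                            outlier_mean (n.-1)%:R a lam s') ^+ 2)).
  by rewrite sumr_const cardC1 card_ord mulr_natl.
by move=> i ii0; rewrite /c !attn_mean_outlier.
Qed.

Lemma lip_on_ge_outlier_slope n r (i0 : 'I_n) a s s' :
  `|a| <= r -> `|s| <= r -> `|s'| <= r -> s != s' ->
  ((Num.sqrt (n.-1)%:R *
     `|outlier_mean (n.-1)%:R a lam s - outlier_mean (n.-1)%:R a lam s'| /
     `|s - s'|)%:E <= lip_on (@self_attention R n d d A 1%:M) (ballR_pow r))%E.
Proof.
move=> ar sr s'r ss'.
have frobX := frob_outlier_col_sub i0 a s s' u1.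
have neqX : outlier_col i0 a s *m u <> outlier_col i0 a s' *m u.
  move=> E; move: frobX; rewrite E subrr /frob big1 ?sqrtr0 => [/esym/eqP|i _].
    by rewrite normr_eq0 subr_eq0 (negbTE ss').
  by rewrite big1 // => k _; rewrite mxE expr0n.
apply: le_trans (lip_on_ge _ (outlier_col_in_ball i0 ar sr)
                             (outlier_col_in_ball i0 ar s'r) neqX).
by rewrite lee_fin frobX ler_wpM2r ?invr_ge0 ?frob_self_attention_outlier_ge.
Qed.

End Eigenvector.

Lemma eigenvalue_unit_row d (A : 'M[R]_d) (lam : R) : eigenvalue A lam ->
  exists2 u : 'rV[R]_d, u *m A = lam *: u & \sum_k u 0 k ^+ 2 = 1.
Proof.
move=> /eigenvalueP [v vA v0].
set S := \sum_k v 0 k ^+ 2.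
have S0 : 0 < S.
  rewrite lt0r sumr_ge0 ?andbT => [|k _]; last exact: sqr_ge0.
  apply/eqP => /psumr_eq0P S0; move/eqP: v0; apply; apply/rowP => k.
  by have /eqP := S0 (fun i _ => sqr_ge0 _) k isT; rewrite sqrf_eq0 mxE => /eqP.
exists ((Num.sqrt S)^-1 *: v); first by rewrite -scalemxAl vA !scalerA mulrC.
under eq_bigr do rewrite mxE exprMn.
by rewrite -mulr_sumr exprVn sqr_sqrtr ?ltW // mulVf // lt0r_neq0.
Qed.

End RankOneInputs.

Section Slope.
Variable R : realType.

Lemma outlier_mean_slope_ge (m a lam s e : R) : 0 <= m -> 0 < e -> s <= a ->
  a * lam * (s - a) *
    (m * expR (a * a * lam) * expR (a * (s + e) * lam) /
     ((expR (a * (s + e) * lam) + m * expR (a * a * lam)) *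
      (expR (a * s * lam) + m * expR (a * a * lam))))
  <= (outlier_mean m a lam (s + e) - outlier_mean m a lam s) / e.
Proof.
move=> m0 e0 sa; rewrite /outlier_mean.
have -> : a * (s + e) * lam = a * s * lam + a * e * lam by ring.
rewrite expRD.
set x := expR (a * s * lam); set y := expR (a * e * lam).
set c := m * expR (a * a * lam).
have x0 : 0 < x := expR_gt0 _.
have y0 : 0 < y := expR_gt0 _.
have c0 : 0 <= c by rewrite mulr_ge0 ?expR_ge0.
have D1 : 0 < x * y + c by rewrite ltr_wpDr ?mulr_gt0.
have D2 : 0 < x + c by rewrite ltr_wpDr.
(* [y - 1 <= y ln y], i.e. [1 + x <= expR x] at [x = - ln y] *)
have y_ge : y - 1 <= y * (a * e * lam).
  have := expR_ge1Dx (- (a * e * lam)); rewrite expRN -/y => h.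
  have : y * (1 - a * e * lam) <= 1 by rewrite mulrC -ler_pdivlMr // mul1r.
  lra.
have ys : y * (a * lam * (s - a) * e) <= (y - 1) * (s - a).
  have -> : y * (a * lam * (s - a) * e) = (s - a) * (y * (a * e * lam)) by ring.
  by rewrite [_ * (s - a)]mulrC ler_wnM2l // subr_le0.
have -> : (x * y * (s + e) + m * (expR (a * a * lam) * a)) / (x * y + c) -
          (x * s + m * (expR (a * a * lam) * a)) / (x + c) =
          e * (x * y / (x * y + c)) +
          c * x * ((y - 1) * (s - a)) / ((x * y + c) * (x + c)).
  by rewrite /c; field; rewrite -/c (lt0r_neq0 D1) (lt0r_neq0 D2).
rewrite ler_pdivlMr // -[leLHS]add0r lerD //.
  by rewrite mulr_ge0 ?ltW // divr_gt0 ?mulr_gt0.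
have -> : a * lam * (s - a) * (c * (x * y) / ((x * y + c) * (x + c))) * e =
    c * x * (y * (a * lam * (s - a) * e)) / ((x * y + c) * (x + c)) by ring.
by rewrite ler_pM2r ?invr_gt0 ?mulr_gt0 // ler_wpM2l // mulr_ge0 // ltW.
Qed.

End Slope.

Section Limits.
Variable R : realType.

(* With [p = (n - 1) e^(-2 gamma r^2)] and [e = e^(-1/r)], the ratio of the slope
   obtained below to [gamma / 2 r^2 e^(gamma r^2)]. *)
Definition slope_ratio (p e : R) : R := 4 * Num.sqrt p * e * p / ((e + p) * (1 + p)).

Lemma slope_ratio_ge0 (p e : R) : 0 <= p -> 0 < e -> 0 <= slope_ratio p e.
Proof.
by move=> p0 e0; rewrite divr_ge0 ?mulr_ge0 ?sqrtr_ge0 ?addr_ge0 // ltW.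
Qed.

Lemma slope_ratio_cvg T (F : set_system T) {FF : Filter F} (p e : T -> R) :
  p x @[x --> F] --> (1 : R) -> e x @[x --> F] --> (1 : R) ->
  slope_ratio (p x) (e x) @[x --> F] --> (1 : R).
Proof.
move=> p1 e1.
have sp1 : Num.sqrt (p x) @[x --> F] --> (1 : R).
  by rewrite -sqrtr1; apply: continuous_cvg p1; exact: sqrt_continuous.
have num : 4 * Num.sqrt (p x) * e x * p x @[x --> F] --> (4 * 1 * 1 * 1 : R).
  by apply: cvgM => //; apply: cvgM => //; apply: cvgM => //; exact: cvg_cst.
have den : (e x + p x) * (1 + p x) @[x --> F] --> ((1 + 1) * (1 + 1) : R).
  by apply: cvgM; apply: cvgD => //; exact: cvg_cst.
have den0 : (1 + 1) * (1 + 1) != 0 :> R by rewrite lt0r_neq0.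
have -> : (1 : R) = 4 * 1 * 1 * 1 / ((1 + 1) * (1 + 1)) by field.
exact: cvgM num (cvgV den0 den).
Qed.

Lemma pred_ratio_cvg T (F : set_system T) {FF : Filter F} (n : T -> nat) (h : T -> R) :
  (forall x, 0 < h x) -> (h x)^-1 @[x --> F] --> (0 : R) ->
  (n x)%:R / h x @[x --> F] --> (1 : R) -> (n x).-1%:R / h x @[x --> F] --> (1 : R).
Proof.
move=> h0 hV0 n1.
have n1' : (n x)%:R / h x - (h x)^-1 @[x --> F] --> (1 - 0 : R) by apply: cvgB.
rewrite subr0 in n1'.
have bounds : \forall x \near F,
    (n x)%:R / h x - (h x)^-1 <= (n x).-1%:R / h x <= (n x)%:R / h x.
  apply: filterE => x.
  rewrite -[X in _ - X <= _]mul1r -mulrBl !ler_pM2r ?invr_gt0 //.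
  case: (n x) => [|k] /=; first by rewrite mulr0n sub0r lerN10 lexx.
  by rewrite mulrSr addrK lexx lerDl ler01.
by apply: (squeeze_cvgr bounds).
Qed.

Lemma cvgr_inv_expR_sqr (c : R) :
  0 < c -> (expR (c * r ^+ 2))^-1 @[r --> +oo] --> (0 : R).
Proof.
move=> c0.
have -> : (fun r => (expR (c * r ^+ 2))^-1) =
          (fun x => expR (- x)) \o (fun r => c * r ^+ 2).
  by apply/funext => r; rewrite /= expRN.
have sqr_oo := @gt0_cvgMry R _ (@proper_pinfty_nbhs R) c _ c0 (@cvgr_expr2 R).
by apply: (cvg_comp _ _ sqr_oo); exact: cvgr_expR.
Qed.

Lemma cvgr_expR_Ninv : expR (- r^-1) @[r --> +oo] --> (1 : R).
Proof.
rewrite -expR0 -oppr0; apply: continuous_cvg; first exact: continuous_expR.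
apply: cvgN; apply/gtr0_cvgV0; last exact: cvg_id.
exact: nbhs_pinfty_gt.
Qed.

End Limits.

Section LipschitzLowerBound.
Variables (R : realType) (d : nat) (A : 'M[R]_d) (lam : R) (u : 'rV[R]_d).
Hypotheses (uA : u *m A = lam *: u) (u1 : \sum_k u 0 k ^+ 2 = 1).
Variables (al g : R).
Hypotheses (g0 : 0 < g) (rate : lam * al * (-1 - al) = 2 * g).
Hypotheses (lam_al : lam * al < 0) (al1 : `|al| <= 1).

(* The displacement of the outlier, chosen so that [al r * step r * lam = - 1 / r]. *)
Let step (r : R) := - (lam * al * r ^+ 2)^-1.

Let step_gt0 r : 0 < r -> 0 < step r.
Proof.
by move=> r0; rewrite oppr_gt0 invr_lt0 pmulr_llt0 ?exprn_gt0.
Qed.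

Lemma slope_ratio_le_outlier_slope (m r : R) : 0 <= m -> 0 < r ->
  slope_ratio (m / expR (2 * g * r ^+ 2)) (expR (- r^-1)) * (g / 2) * r ^+ 2 *
    expR (g * r ^+ 2) <=
  Num.sqrt m * ((outlier_mean m (al * r) lam (- r + step r) -
                 outlier_mean m (al * r) lam (- r)) / step r).
Proof.
move=> m0 r0.
have sa : - r <= al * r.
  by rewrite -mulN1r ler_pM2r //; move: al1; rewrite ler_norml => /andP[].
apply: le_trans _
  (ler_wpM2l (sqrtr_ge0 m) (outlier_mean_slope_ge lam m0 (step_gt0 r0) sa)).
set T := expR (g * r ^+ 2); set c0 := expR (al * r * (al * r) * lam).
set eh := expR (- r^-1); set p := m / expR (2 * g * r ^+ 2).
have T0 : 0 < T := expR_gt0 _.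
have c00 : 0 < c0 := expR_gt0 _.
have eh0 : 0 < eh := expR_gt0 _.
have p0 : 0 <= p by rewrite divr_ge0 ?expR_ge0.
have T2 : expR (2 * g * r ^+ 2) = T ^+ 2.
  by rewrite [RHS]expr2 /T -expRD; congr expR; ring.
have mE : m = p * T ^+ 2 by rewrite /p -T2 divfK // gt_eqF ?expR_gt0.
have K : al * r * lam * (- r - al * r) = 2 * g * r ^+ 2 by rewrite -rate; ring.
have E1 : expR (al * r * - r * lam) = T ^+ 2 * c0.
  by rewrite -T2 -expRD -[2 * g]rate; congr expR; ring.
have E2 : expR (al * r * (- r + step r) * lam) = T ^+ 2 * c0 * eh.
  rewrite -E1 -expRD; congr expR; rewrite /step; field.
  rewrite (lt0r_neq0 r0) /=; apply/andP; split;
    by apply: contraTneq lam_al => ->; rewrite ?mulr0 ?mul0r ltxx.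
apply: le_trans (_ : _ <= Num.sqrt m * (2 * g * r ^+ 2 *
    (m * c0 * expR (al * r * (- r + step r) * lam) /
     ((expR (al * r * (- r + step r) * lam) + m * c0) *
      (expR (al * r * - r * lam) + m * c0))))) _; last by rewrite -K.
rewrite E1 E2 [in leRHS]mE sqrtrM // sqrtr_sqr gtr0_norm //.
have ehp : eh + p != 0 by rewrite gt_eqF // ltr_wpDr.
have onep : 1 + p != 0 by rewrite gt_eqF // ltr_wpDr.
rewrite (_ : T ^+ 2 * c0 * eh + p * T ^+ 2 * c0 = T ^+ 2 * c0 * (eh + p)); last by ring.
rewrite (_ : T ^+ 2 * c0 + p * T ^+ 2 * c0 = T ^+ 2 * c0 * (1 + p)); last by ring.
rewrite le_eqVlt; apply/orP; left; apply/eqP; rewrite /slope_ratio.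
by field; rewrite ehp onep !gt_eqF.
Qed.

Lemma lip_self_attention_ge_at (k : nat) (r : R) : 0 < r -> step r <= 2 * r ->
  ((slope_ratio ((k.-1)%:R / expR (2 * g * r ^+ 2)) (expR (- r^-1)) * (g / 2) *
     r ^+ 2 * expR (g * r ^+ 2))%:E <=
   lip_on (@self_attention R k d d A 1%:M) (ballR_pow r))%E.
Proof.
move=> r0 step_le; case: k => [|k].
  by rewrite /slope_ratio mul0r sqrtr0 !(mulr0, mul0r) lip_on_ge0.
have step0 := step_gt0 r0.
have ar : `|al * r| <= r by rewrite normrM (gtr0_norm r0) -[leRHS]mul1r ler_pM2r.
have sr : `|- r| <= r by rewrite normrN gtr0_norm.
have s'r : `|- r + step r| <= r by rewrite ler_norml; apply/andP; split; lra.
have ss' : - r + step r != - r by rewrite gt_eqF // ltrDl.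
apply: le_trans (lip_on_ge_outlier_slope uA u1 (@ord0 k) ar s'r sr ss').
rewrite lee_fin (le_trans (slope_ratio_le_outlier_slope _ r0)) ?ler0n //.
rewrite opprK addrAC addNr add0r (gtr0_norm step0) mulrA.
rewrite ler_wpM2r ?invr_ge0 ?(ltW step0) //.
by rewrite ler_wpM2l ?sqrtr_ge0 ?ler_norm.
Qed.

Lemma lip_self_attention_asymptotic_ge (n : R -> nat) :
  ((n r)%:R / expR (2 * g * r ^+ 2)) @[r --> +oo] --> (1 : R) ->
  exists theta : R -> R,
    (forall r, 0 <= r -> 0 <= theta r) /\
    theta r @[r --> +oo] --> (1 : R) /\
    (forall r : R, 0 <= r ->
      ((theta r * (g / 2) * r ^+ 2 * expR (g * r ^+ 2))%:E <=
       lip_on (@self_attention R (n r) d d A 1%:M) (ballR_pow r))%E).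
Proof.
move=> n1.
pose ratio r := slope_ratio ((n r).-1%:R / expR (2 * g * r ^+ 2)) (expR (- r^-1)).
(* [step r <= 2 r] keeps the moved outlier [- r + step r] in the ball. *)
exists (fun r => if (0 < r) && (step r <= 2 * r) then ratio r else 0).
split; [|split].
- move=> r _; case: ifP => // _.
  by rewrite slope_ratio_ge0 ?divr_ge0 ?expR_ge0 ?expR_gt0.
- have ratio1 : ratio r @[r --> +oo] --> (1 : R).
    rewrite /ratio; apply: slope_ratio_cvg (@cvgr_expR_Ninv R).
    apply: pred_ratio_cvg n1 => [r|]; first exact: expR_gt0.
    by apply: cvgr_inv_expR_sqr; rewrite mulr_gt0.
  apply: cvg_trans ratio1; apply: near_eq_cvg; near=> r.
  suff -> : (0 < r) && (step r <= 2 * r) by [].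
  have r1 : 1 <= r by near: r; apply: nbhs_pinfty_ge; exact: num_real.
  have rk : (- (lam * al))^-1 <= r by near: r; apply: nbhs_pinfty_ge; exact: num_real.
  have r0 : 0 < r := lt_le_trans ltr01 r1.
  have k0 : 0 < - (lam * al) by rewrite oppr_gt0.
  have kr : 1 <= - (lam * al) * r by rewrite -ler_pdivrMl // mulr1.
  have kr2 : 1 <= - (lam * al) * r ^+ 2.
    by rewrite expr2 mulrA (le_trans kr) // ler_pMr ?mulr_gt0.
  rewrite r0 /step -invrN -mulNr (le_trans _ (_ : 1 <= 2 * r)) //; last lra.
  by rewrite invf_le1 ?(lt_le_trans ltr01 kr2).
- move=> r r0; case: ifP => [/andP[rpos step_le]|_].
    exact: lip_self_attention_ge_at rpos step_le.
  by rewrite !mul0r lip_on_ge0.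
Unshelve. all: end_near.
Qed.

End LipschitzLowerBound.

Theorem mainTheorem6 (R : realType) (d : nat) (Q K : 'M[R]_d)
  (gamma1 gammadelta : R) (n : R -> nat) :
  let A := (Num.sqrt (d%:R))^-1 *: (K^T *m Q) in
  (* gamma1 is the largest, gammadelta the smallest real eigenvalue of A *)
  eigenvalue A gamma1 -> (forall g, eigenvalue A g -> g <= gamma1) ->
  eigenvalue A gammadelta -> (forall g, eigenvalue A g -> gammadelta <= g) ->
  let gamma := Num.max (- gammadelta) (gamma1 / 8) in
  0 < gamma ->
  ((n r)%:R / expR (2 * gamma * r ^+ 2) : R) @[r --> +oo%R] --> (1 : R) ->
  exists theta : R -> R,
    (forall r, 0 <= r -> 0 <= theta r) /\
    (theta r : R) @[r --> +oo%R] --> (1 : R) /\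
    (forall r : R, 0 <= r ->
      ((theta r * (gamma / 2) * r ^+ 2 * expR (gamma * r ^+ 2))%:E <=
       lip_on (@self_attention R (n r) d d A 1%:M) (@ballR_pow R (n r) d r))%E).
Proof.
move=> A eig1 _ eigd _ gamma g0 n1.
(* [lam al (-1 - al) / 2] is maximal at [al = -1/2] when [lam > 0], and over
   [|al| <= 1] at [al = 1] when [lam < 0]. *)
have [lam [al [eig rate lam_al al1]]] : exists lam al, [/\ eigenvalue A lam,
    lam * al * (-1 - al) = 2 * gamma, lam * al < 0 & `|al| <= 1].
  have [le_g|lt_g] := leP (- gammadelta) (gamma1 / 8).
  - have gE : gamma = gamma1 / 8 by rewrite /gamma max_r.
    exists gamma1, (-1/2); split => //; rewrite ?gE in g0 *; try lra.
    by rewrite ler_norml; apply/andP; split; lra.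
  - have gE : gamma = - gammadelta by rewrite /gamma max_l // ltW.
    by exists gammadelta, 1; split; rewrite ?normr1 ?gE in g0 * => //; lra.
have [u uA u1] := eigenvalue_unit_row eig.
exact (lip_self_attention_asymptotic_ge uA u1 g0 rate lam_al al1 n1).
Qed.
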